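(* Let $I$ and $M$ be sets and let $\Phi\colon I\times I\ni(\alpha,\beta)\mapsto\Phi_{\alpha\beta}\in 2^{M\times M}$ be a map (so each $\Phi_{\alpha\beta}$ is a binary relation contained in $M\times M$). Then $\Phi$ satisfies, for all $\alpha,\beta,\gamma\in I$, $$\Phi_{\alpha\beta}\circ\Phi_{\beta\gamma}\subseteq\Phi_{\alpha\gamma},\qquad \Phi_{\alpha\beta}^{-1}\subseteq\Phi_{\beta\alpha},\qquad \Phi_{\alpha\alpha}\subseteq\mathrm{id}_M,$$ if and only if there exists a system $\{\varphi_\alpha\}_{\alpha\in I}$ of binary relations, each of which is an injective co-injection, such that $\Phi_{\alpha\beta}=\varphi_\alpha\circ\varphi_\beta^{-1}$ for all $(\alpha,\beta)\in I\times I$.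
   Context: A binary relation is a set of ordered pairs. For binary relations $\rho,\sigma$: the composition is $\rho\circ\sigma=\{(a,b)\mid \exists c\colon (c,b)\in\rho\ \wedge\ (a,c)\in\sigma\}$; the inverse is $\rho^{-1}=\{(a,b)\mid (b,a)\in\rho\}$; $\mathrm{dom}\,\rho=\{a\mid\exists b\colon (a,b)\in\rho\}$, $\mathrm{rng}\,\rho=\{b\mid \exists a\colon (a,b)\in\rho\}$; $\mathrm{id}_M=\{(x,x)\mid x\in M\}$. A binary relation $\rho$ is called injective (an injection) if $(b_1,a)\in\rho$ and $(b_2,a)\in\rho$ imply $b_1=b_2$; it is called a co-injection if $\rho^{-1}$ is injective, i.e. $(b,a_1)\in\rho$ and $(b,a_2)\in\rho$ imply $a_1=a_2$. An injective co-injection is a relation that is both. *)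

(* binary relations as Prop-valued predicates.
   A relation between A and B is  rel A B := A -> B -> Prop,
   where  r a b  means  (a,b) ∈ r. *)

Definition rel (A B : Type) : Type := A -> B -> Prop.

Definition rcomp {A C B : Type} (rho : rel C B) (sigma : rel A C) : rel A B :=
  fun a b => exists c, rho c b /\ sigma a c.

Definition rinv {A B : Type} (rho : rel A B) : rel B A := fun a b => rho b a.

Definition rid (M : Type) : rel M M := fun x y => x = y.

Definition rsub {A B : Type} (r s : rel A B) : Prop := forall a b, r a b -> s a b.
Definition req {A B : Type} (r s : rel A B) : Prop := forall a b, r a b <-> s a b.

Definition rinjective {A B : Type} (rho : rel A B) : Prop :=
  forall b1 b2 a, rho b1 a -> rho b2 a -> b1 = b2.

Definition rcoinjective {A B : Type} (rho : rel A B) : Prop := rinjective (rinv rho).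

(* A point of the space to be built is identified with the relation listing
   all of its coordinates: the point with coordinate [m] in chart [al] is
   [fun be n => Phi be al m n], which makes sense as long as [Phi al al m m].
   Transitivity and symmetry of [Phi] say exactly that [Phi]-related
   coordinates give the same relation, so each chart is injective; the
   diagonal condition makes it co-injective.  Conversely, for injective
   co-injections the relations [phi al ∘ phi be^-1] compose, invert and
   restrict to the diagonal as required. *)

From Stdlib Require Import FunctionalExtensionality PropExtensionality.

Lemma req_eq {A B : Type} (r s : rel A B) : req r s -> r = s.
Proof.
  intro Hrs.
  apply functional_extensionality; intro a.
  apply functional_extensionality; intro b.
  apply propositional_extensionality, Hrs.
Qed.

Lemma rcomp_rinv_trans {X A B C : Type}
    (rho : rel X A) (sigma : rel X B) (tau : rel X C) :
  rinjective sigma ->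
  rsub (rcomp (rcomp rho (rinv sigma)) (rcomp sigma (rinv tau)))
       (rcomp rho (rinv tau)).
Proof.
  intros Hsigma c a [b [[x [Hrho Hsx]] [y [Hsy Htau]]]].
  assert (x = y) by exact (Hsigma x y b Hsx Hsy); subst y.
  exists x; split; assumption.
Qed.

Lemma rinv_rcomp_rinv {X A B : Type} (rho : rel X A) (sigma : rel X B) :
  rsub (rinv (rcomp rho (rinv sigma))) (rcomp sigma (rinv rho)).
Proof.
  intros b a [x [Hrho Hsigma]].
  exists x; split; assumption.
Qed.

Lemma rcomp_rinv_sub_rid {X M : Type} (rho : rel X M) :
  rcoinjective rho -> rsub (rcomp rho (rinv rho)) (rid M).
Proof.
  intros Hrho a b [x [Hb Ha]].
  exact (Hrho a b x Ha Hb).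
Qed.

Definition transition_system {I M : Type} (Phi : I -> I -> rel M M) : Prop :=
  (forall al be ga : I, rsub (rcomp (Phi al be) (Phi be ga)) (Phi al ga)) /\
  (forall al be : I, rsub (rinv (Phi al be)) (Phi be al)) /\
  (forall al : I, rsub (Phi al al) (rid M)).

Lemma transition_system_req {I M : Type} (Phi Psi : I -> I -> rel M M) :
  (forall al be, req (Phi al be) (Psi al be)) ->
  transition_system Psi -> transition_system Phi.
Proof.
  intros HPhiPsi (Htrans & Hsym & Hdiag).
  split; [|split].
  - intros al be ga a c [b [Hab Hbc]].
    apply HPhiPsi, (Htrans al be ga a c).
    exists b; split; apply HPhiPsi; assumption.
  - intros al be a b Hba.
    apply HPhiPsi, Hsym, HPhiPsi, Hba.
  - intros al a b Haa.
    exact (Hdiag al a b (proj1 (HPhiPsi al al a b) Haa)).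
Qed.

Lemma transition_system_charts {I X M : Type} (phi : I -> rel X M) :
  (forall al, rinjective (phi al)) -> (forall al, rcoinjective (phi al)) ->
  transition_system (fun al be => rcomp (phi al) (rinv (phi be))).
Proof.
  intros Hinj Hcoinj.
  split; [|split].
  - intros al be ga. exact (rcomp_rinv_trans _ _ _ (Hinj be)).
  - intros al be. exact (rinv_rcomp_rinv _ _).
  - intro al. exact (rcomp_rinv_sub_rid _ (Hcoinj al)).
Qed.

Section Charts.

Variables (I M : Type) (Phi : I -> I -> rel M M).
Hypothesis Phi_trans :
  forall al be ga : I, rsub (rcomp (Phi al be) (Phi be ga)) (Phi al ga).
Hypothesis Phi_sym : forall al be : I, rsub (rinv (Phi al be)) (Phi be al).
Hypothesis Phi_diag : forall al : I, rsub (Phi al al) (rid M).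

Definition chart (al : I) : rel (rel I M) M :=
  fun S m => Phi al al m m /\ req S (fun be n => Phi be al m n).

Lemma Phi_refl_l (al be : I) (a b : M) : Phi al be a b -> Phi be be a a.
Proof.
  intro Hab.
  apply (Phi_trans be al be a a).
  exists b; split; [apply Phi_sym|]; exact Hab.
Qed.

Lemma Phi_refl_r (al be : I) (a b : M) : Phi al be a b -> Phi al al b b.
Proof.
  intro Hab.
  apply (Phi_trans al be al b b).
  exists a; split; [|apply Phi_sym]; exact Hab.
Qed.

Lemma Phi_coordinates_req (al be : I) (a b : M) :
  Phi al be a b -> req (fun ga n => Phi ga be a n) (fun ga n => Phi ga al b n).
Proof.
  intros Hab ga n; split; intro Hn.
  - apply (Phi_trans ga be al b n).
    exists a; split; [exact Hn | apply Phi_sym, Hab].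
  - apply (Phi_trans ga al be a n).
    exists b; split; assumption.
Qed.

Lemma chart_rinjective (al : I) : rinjective (chart al).
Proof.
  intros S1 S2 m [_ HS1] [_ HS2].
  apply req_eq; intros be n.
  rewrite (HS1 be n), (HS2 be n); reflexivity.
Qed.

Lemma chart_rcoinjective (al : I) : rcoinjective (chart al).
Proof.
  intros m1 m2 S [Hm1 HS1] [_ HS2].
  assert (Hm2m1 : Phi al al m2 m1) by apply HS2, HS1, Hm1.
  symmetry; exact (Phi_diag al m2 m1 Hm2m1).
Qed.

Lemma chart_transition (al be : I) :
  req (Phi al be) (rcomp (chart al) (rinv (chart be))).
Proof.
  intros a b; split.
  - intro Hab.
    exists (fun ga n => Phi ga be a n).
    split; split.
    + exact (Phi_refl_r al be a b Hab).
    + exact (Phi_coordinates_req al be a b Hab).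
    + exact (Phi_refl_l al be a b Hab).
    + intros ga n; reflexivity.
  - intros [S [[Hb HSb] [_ HSa]]].
    apply HSa, HSb, Hb.
Qed.

End Charts.

Theorem theorem1 (I M : Type) (Phi : I -> I -> rel M M) :
  ((forall al be ga : I, rsub (rcomp (Phi al be) (Phi be ga)) (Phi al ga)) /\
   (forall al be : I, rsub (rinv (Phi al be)) (Phi be al)) /\
   (forall al : I, rsub (Phi al al) (rid M)))
  <->
  (exists (X : Type) (phi : I -> rel X M),
     (forall al : I, rinjective (phi al) /\ rcoinjective (phi al)) /\
     (forall al be : I, req (Phi al be) (rcomp (phi al) (rinv (phi be))))).
Proof.
  split.
  - intros (Htrans & Hsym & Hdiag).
    exists (rel I M), (chart I M Phi).
    split.
    + intro al; split.
      * apply chart_rinjective.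
      * exact (chart_rcoinjective I M Phi Hdiag al).
    + exact (chart_transition I M Phi Htrans Hsym).
  - intros (X & phi & Hphi & Htransition).
    apply (transition_system_req Phi _ Htransition).
    apply transition_system_charts; apply Hphi.
Qed.
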